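(* Let $P$ be a Poisson tensor on $\mathbb{R}^3$, let $H\in C^\infty(\mathbb{R}^3)$, and let $S\in C^\infty(\mathbb{R}^3)$ be a Casimir function for $P$, i.e. $PdS=0$. Let $g$ be the symmetric tensor with components $g^{ij}=H^iH^j-\delta^{ij}\sum_k H^kH^k$. Then at every point of $\mathbb{R}^3$ the vectors $PdH$ and $gdS$ are orthogonal with respect to the Euclidean metric.
   Context: $\mathbb{R}^3$ carries the standard Euclidean metric $h$, used to identify tangent and cotangent spaces with $\mathbb{R}^3$; $H^i=H_i=\partial H/\partial x^i$ in standard coordinates. A Poisson tensor is a skew-symmetric bivector field whose bracket $\{F,G\}=dF\cdot PdG$ satisfies the Jacobi identity. *)

From HB Require Import structures.
From mathcomp Require Import all_boot all_order all_algebra.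
From mathcomp Require Import all_classical all_reals all_analysis.
Set Implicit Arguments. Unset Strict Implicit. Unset Printing Implicit Defensive.
Import Order.TTheory GRing.Theory Num.Theory.
Import numFieldNormedType.Exports.
Local Open Scope ring_scope.

Definition ebase (R : realType) (i : 'I_3) : 'rV[R]_3 := delta_mx 0 i.

Definition partial (R : realType) (i : 'I_3) (f : 'rV[R]_3 -> R) : 'rV[R]_3 -> R :=
  fun x => 'D_(ebase R i) f x.

Fixpoint iter_partial (R : realType) (l : seq 'I_3) (f : 'rV[R]_3 -> R) : 'rV[R]_3 -> R :=
  match l with
  | [::] => f
  | i :: l' => partial i (iter_partial l' f)
  end.

Definition smooth (R : realType) (f : 'rV[R]_3 -> R) : Prop :=
  forall l : seq 'I_3,
    continuous (iter_partial l f) /\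
    forall (i : 'I_3) (x : 'rV[R]_3), derivable (iter_partial l f) x (ebase R i).

Definition bivector (R : realType) := 'I_3 -> 'I_3 -> 'rV[R]_3 -> R.

Definition pbracket (R : realType) (P : bivector R) (F G : 'rV[R]_3 -> R) : 'rV[R]_3 -> R :=
  fun x => \sum_(i < 3) \sum_(j < 3) partial i F x * P i j x * partial j G x.

Definition poisson_tensor (R : realType) (P : bivector R) : Prop :=
  (forall i j, smooth (P i j)) /\
  (forall i j x, P i j x = - P j i x) /\
  (forall F G K, smooth F -> smooth G -> smooth K ->
     forall x, pbracket P F (pbracket P G K) x + pbracket P G (pbracket P K F) x
               + pbracket P K (pbracket P F G) x = 0).

Definition Pd (R : realType) (P : bivector R) (F : 'rV[R]_3 -> R) (x : 'rV[R]_3) (i : 'I_3) : R :=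
  \sum_(j < 3) P i j x * partial j F x.

Definition casimir (R : realType) (P : bivector R) (S : 'rV[R]_3 -> R) : Prop :=
  forall x i, Pd P S x i = 0.

Definition gH (R : realType) (H : 'rV[R]_3 -> R) (i j : 'I_3) (x : 'rV[R]_3) : R :=
  partial i H x * partial j H x
  - (i == j)%:R * \sum_(k < 3) partial k H x * partial k H x.

Definition gd (R : realType) (H S : 'rV[R]_3 -> R) (x : 'rV[R]_3) (i : 'I_3) : R :=
  \sum_(j < 3) gH H i j x * partial j S x.

Definition eucl_dot (R : realType) (u v : 'I_3 -> R) : R := \sum_(i < 3) u i * v i.

From HB Require Import structures.
From mathcomp Require Import all_boot all_order all_algebra.
From mathcomp Require Import all_classical all_reals all_analysis.
Import GRing.Theory Num.Theory.
Local Open Scope ring_scope.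

(* The statement is pointwise linear algebra: only the skew-symmetry of P
   and P dS = 0 matter.
   With h = dH one has g dS = (h.dS) h - |h|^2 dS, so
   (P h).(g dS) = (h.dS) (P h).h - |h|^2 (P h).dS.
   For a skew matrix (A u).v = - u.(A v); hence (P h).h = 0, and
   (P h).dS = - h.(P dS) = 0. *)

Section SkewOrthogonality.
Variables (R : numDomainType) (n : nat).

Definition dotv (u v : 'I_n -> R) : R := \sum_(i < n) u i * v i.

Definition mulmv (A : 'I_n -> 'I_n -> R) (u : 'I_n -> R) (i : 'I_n) : R :=
  \sum_(j < n) A i j * u j.

Lemma dotvC u v : dotv u v = dotv v u.
Proof. by apply: eq_bigr => i _; rewrite mulrC. Qed.

Definition gram (h : 'I_n -> R) (i j : 'I_n) : R :=
  h i * h j - (i == j)%:R * dotv h h.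

Lemma mulmv_gram (h s : 'I_n -> R) (i : 'I_n) :
  mulmv (gram h) s i = h i * dotv h s - dotv h h * s i.
Proof.
rewrite /mulmv /gram.
under eq_bigr do rewrite mulrBl.
rewrite sumrB mulr_sumr; congr (_ - _).
  by apply: eq_bigr => j _; rewrite mulrA.
rewrite (bigD1 i) //= eqxx mul1r big1 ?addr0 // => j /negbTE ji.
by rewrite eq_sym ji !mul0r.
Qed.

Variable A : 'I_n -> 'I_n -> R.
Hypothesis A_skew : forall i j, A i j = - A j i.

Lemma dotv_skewl u v : dotv (mulmv A u) v = - dotv u (mulmv A v).
Proof.
rewrite /dotv /mulmv -sumrN.
under eq_bigr do rewrite mulr_suml.
rewrite exchange_big /=; apply: eq_bigr => j _.
rewrite mulr_sumr -sumrN; apply: eq_bigr => i _.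
by rewrite A_skew !mulNr [A j i * u j]mulrC mulrA.
Qed.

Lemma dotv_skew_self u : dotv (mulmv A u) u = 0.
Proof.
(* x = -x forces x = 0 in characteristic zero. *)
have /eqP := dotv_skewl u u.
by rewrite [dotv u _]dotvC -addr_eq0 -mulr2n mulrn_eq0 => /eqP.
Qed.

Lemma skew_orthogonal_gram (h s : 'I_n -> R) :
  (forall i, mulmv A s i = 0) ->
  dotv (mulmv A h) (mulmv (gram h) s) = 0.
Proof.
move=> As0.
have dot_As0 : dotv h (mulmv A s) = 0 by apply: big1 => i _; rewrite As0 mulr0.
rewrite {1}/dotv; under eq_bigr do
  rewrite mulmv_gram mulrBr mulrA [_ * dotv h s]mulrC [mulmv A h _ * (dotv h h * _)]mulrCA.
rewrite sumrB -!mulr_sumr -!/(dotv (mulmv A h) _).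
by rewrite dotv_skew_self dotv_skewl dot_As0 oppr0 !mulr0 subrr.
Qed.
End SkewOrthogonality.

Theorem mainTheorem2 (R : realType) (P : bivector R) (H S : 'rV[R]_3 -> R) :
  poisson_tensor P -> smooth H -> smooth S -> casimir P S ->
  forall x : 'rV[R]_3, eucl_dot (Pd P H x) (gd H S x) = 0.
Proof.
move=> [_ [P_skew _]] _ _ S_casimir x.
exact: (@skew_orthogonal_gram R 3 (fun i j => P i j x) (fun i j => P_skew i j x)
          (fun i => partial i H x) (fun i => partial i S x) (S_casimir x)).
Qed.
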